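(* For every $n\in\mathbb{N}$ and $\varepsilon\in(0,1)$, the set $\mathsf{PAULI}_n$ of $n$-qubit Pauli channels admits a uniformly $\varepsilon$-approximate sample compression scheme of size $\mathcal{O}\big(\frac{n}{\varepsilon^2}\big)$. This sample compression scheme even succeeds on training data whose labels have been corrupted by adversarial label noise of strength $\varepsilon/3$: for every $\mathcal{P}\in\mathsf{PAULI}_n$ and every finite sample $S=\{(E^{(i)},y_i)\}_{i=1}^m$ with $|y_i-f_{\mathcal{P}}(E^{(i)})|\leq\varepsilon/3$ for all $i$, the reconstructed function $\hat f=\rho(\kappa(S))$ satisfies $|\hat f(E^{(i)})-f_{\mathcal{P}}(E^{(i)})|\leq\varepsilon$ for all $i$.
   Context: $\mathsf{X}$ is the set of channel test operators on two $n$-qubit systems $A,B$: $E_{A,B}\geq0$ with $E_{A,B}\leq\sigma_A\otimes\mathbb{1}_B$ for some density operator $\sigma_A$. An $n$-qubit Pauli channel is $\mathcal{P}(\rho)=\sum_{\vec z,\vec x}p_{\vec z,\vec x}P^{\vec z,\vec x}\rho P^{\vec z,\vec x\dagger}$ ($P^{\vec z,\vec x}=\mathrm{i}^{\vec z\cdot\vec x}Z^{\vec z}X^{\vec x}$, $(p_{\vec z,\vec x})$ a probability vector), identified with $f_{\mathcal{P}}:\mathsf{X}\to[0,1]$, $f_{\mathcal{P}}(E)=\mathrm{Tr}[E\,C^{\mathcal{P}}_{A,B}]$, with Choi matrix $C^{\mathcal{P}}_{A,B}=\sum_{i,j}|i\rangle\langle j|\otimes\mathcal{P}(|i\rangle\langle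 j|)$. A uniformly $\varepsilon$-approximate sample compression scheme of size $k$ for a class $\mathcal{F}\subseteq[0,1]^{\mathsf{X}}$ is a pair of maps: a compression map $\kappa$ sending each finite sample $S\subseteq\mathsf{X}\times[0,1]$ to a subsample $\kappa(S)\subseteq S$ of size at most $k$, and a reconstruction map $\rho$ sending such subsamples to functions $\mathsf{X}\to[0,1]$, such that for all $f\in\mathcal{F}$ and all $S=\{(x_i,f(x_i))\}_{i=1}^m$ we have $\max_i|\rho(\kappa(S))(x_i)-f(x_i)|\leq\varepsilon$. *)

From HB Require Import structures.
From mathcomp Require Import all_boot all_order all_algebra.
From mathcomp Require Import finmap.
From mathcomp Require Import complex mxtens.
From mathcomp Require Import reals.

Set Implicit Arguments.
Unset Strict Implicit.
Unset Printing Implicit Defensive.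

Import Order.TTheory GRing.Theory Num.Theory.
Local Open Scope ring_scope.
Local Open Scope fset_scope.

Section Pauli.
Variable R : realType.
Local Notation C := R[i].

(* n-qubit Hilbert space dimension; computational basis indexed by 'I_(2^n),
   the k-th qubit of basis vector |a> being the k-th binary digit of a. *)
Definition qdim (n : nat) := (2 ^ n)%N.
Definition qbit (n : nat) (a : 'I_(qdim n)) (k : 'I_n) : bool := odd (a %/ 2 ^ k).

Definition bits (n : nat) := {ffun 'I_n -> bool}.

Definition adjmx (m p : nat) (A : 'M[C]_(m, p)) : 'M[C]_(p, m) :=
  (map_mx (@conjc R) A)^T.

(* positive semidefinite: <v, A v> >= 0 for all v (in the order of C = R[i],
   this means the quadratic form is real and nonnegative) *)
Definition psdmx (m : nat) (A : 'M[C]_m) : Prop :=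
  forall v : 'cV[C]_m, 0 <= (adjmx v *m A *m v) 0 0.

Definition density (m : nat) (s : 'M[C]_m) : Prop := psdmx s /\ \tr s = 1.

(* channel test operators on A,B (each n qubits), operators on A (x) B;
   A is the first tensor factor *)
Definition is_test (n : nat) (E : 'M[C]_(qdim n * qdim n)) : Prop :=
  psdmx E /\
  exists sigma : 'M[C]_(qdim n), density sigma /\
    psdmx ((sigma *t (1%:M : 'M[C]_(qdim n))) - E).

(* X^x = X^{x_1} (x) ... (x) X^{x_n} : |b> |-> |b xor x> *)
Definition Xpow (n : nat) (x : bits n) : 'M[C]_(qdim n) :=
  \matrix_(a, b) (if [forall k, qbit a k == (qbit b k (+) x k)] then 1 else 0).
(* Z^z = Z^{z_1} (x) ... (x) Z^{z_n} : |a> |-> (-1)^{z.a} |a> *)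
Definition Zpow (n : nat) (z : bits n) : 'M[C]_(qdim n) :=
  \matrix_(a, b) (if a == b then (-1) ^+ #|[set k | z k && qbit a k]| else 0).

Definition pauli (n : nat) (z x : bits n) : 'M[C]_(qdim n) :=
  ('i%C) ^+ #|[set k | z k && x k]| *: (Zpow z *m Xpow x).

Definition pauli_prob (n : nat) (p : {ffun bits n * bits n -> R}) : Prop :=
  (forall zx, 0 <= p zx) /\ \sum_zx p zx = 1.

Definition pauli_channel (n : nat) (p : {ffun bits n * bits n -> R})
    (rho : 'M[C]_(qdim n)) : 'M[C]_(qdim n) :=
  \sum_zx ((p zx)%:C%C *: (pauli zx.1 zx.2 *m rho *m adjmx (pauli zx.1 zx.2))).

Definition choi (n : nat) (p : {ffun bits n * bits n -> R}) : 'M[C]_(qdim n * qdim n) :=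
  \sum_(i < qdim n) \sum_(j < qdim n)
     ((delta_mx i j : 'M[C]_(qdim n)) *t pauli_channel p (delta_mx i j)).

(* f_P(E) = Tr[E C^P] (real for test operators; we take the real part) *)
Definition fP (n : nat) (p : {ffun bits n * bits n -> R})
    (E : 'M[C]_(qdim n * qdim n)) : R :=
  complex.Re (\tr (E *m choi p)).

Definition example (n : nat) := ('M[C]_(qdim n * qdim n) * R)%type.

Definition pauli_compression_scheme (n : nat) (eps eta : R) (k : nat)
    (kappa : {fset example n} -> {fset example n})
    (rho : {fset example n} -> 'M[C]_(qdim n * qdim n) -> R) : Prop :=
  (forall S : {fset example n}, kappa S `<=` S /\ (#|` kappa S| <= k)%N) /\
  (forall (S : {fset example n}) E, is_test E -> 0 <= rho S E <= 1) /\
  (forall p, pauli_prob p ->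
     forall S : {fset example n},
       (forall s, s \in S -> is_test s.1 /\ s.2 = fP p s.1) ->
       forall s, s \in S -> `|rho (kappa S) s.1 - fP p s.1| <= eps) /\
  (forall p, pauli_prob p ->
     forall S : {fset example n},
       (forall s, s \in S -> [/\ is_test s.1, 0 <= s.2 <= 1 &
                                 `|s.2 - fP p s.1| <= eta]) ->
       forall s, s \in S -> `|rho (kappa S) s.1 - fP p s.1| <= eps).

End Pauli.

(* The Choi matrix of the Pauli channel with error rates p is
   sum_j p_j |P_j>><<P_j|, so f_P(E) = sum_j p_j x_j(E) with
   x_j(E) = <<P_j| E |P_j>>, and x_j(E) lies in [0, 1] for every test E
   because P_j is unitary and 0 <= E <= sigma (x) 1.  PAULI_n is thus a class
   of mixtures of 4^n bounded features.  A mistake-driven exponential-weights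
   learner corrects, one at a time, the examples it predicts with error above
   2 eps/3; each correction multiplies the potential
   sum_j exp(eta u_j) / exp(eta <p, u>) by at most exp(-eps^2/36), and the
   potential starts at 4^n and never drops below 1, so there are at most
   72 n / eps^2 corrections.  The compressed sample is the set of corrected
   examples: rerunning the learner on it replays the same run, and the final
   prediction, clamped to [0, 1], is within 2 eps/3 of every label, hence
   within eps of f_P. *)

From HB Require Import structures.
From mathcomp Require Import all_boot all_order all_algebra.
From mathcomp Require Import finmap complex mxtens reals.
From mathcomp Require Import sequences exp.
From mathcomp Require Import ring lra.
Import Order.TTheory GRing.Theory Num.Theory.

Set Implicit Arguments.
Unset Strict Implicit.
Unset Printing Implicit Defensive.

Lemma binary_digits_inj n a b : a < 2 ^ n -> b < 2 ^ n ->
  (forall k, k < n -> odd (a %/ 2 ^ k) = odd (b %/ 2 ^ k)) -> a = b.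
Proof.
elim: n a b => [|n IH] a b; first by rewrite !ltnS !leqn0 => /eqP-> /eqP->.
move=> a_lt b_lt same_digits.
have a2_eq_b2 : a %/ 2 = b %/ 2.
  apply: IH; rewrite ?ltn_divLR -?expnSr // => k k_lt.
  by rewrite -!divnMA -expnS; apply: same_digits.
have := same_digits 0%N (ltn0Sn n); rewrite !divn1 => odd_ab.
by rewrite (divn_eq a 2) (divn_eq b 2) a2_eq_b2 !modn2 odd_ab.
Qed.

Local Open Scope ring_scope.

Section LeastFilter.
Variables (T : eqType) (leT : rel T) (P : pred T).
Hypotheses (leT_total : total leT) (leT_trans : transitive leT).
Hypothesis leT_anti : antisymmetric leT.

Definition least_filter (s : seq T) := ohead (sort leT [seq t <- s | P t]).

Lemma least_filterP s t : least_filter s = Some t ->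
  [/\ t \in s, P t & forall y, y \in s -> P y -> leT t y].
Proof.
rewrite /least_filter; have := mem_sort leT [seq t <- s | P t].
have := sort_sorted leT_total [seq t <- s | P t].
case: sort => [|x r] //= sorted_xr mem_xr [<-].
have /andP[P_x xs] : P x && (x \in s) by rewrite -mem_filter -mem_xr mem_head.
split=> // y ys P_y; have : y \in x :: r by rewrite mem_xr mem_filter P_y.
case/predU1P => [->|yr]; first by case/orP: (leT_total x x).
exact: allP (order_path_min leT_trans sorted_xr) y yr.
Qed.

Lemma least_filterN s : least_filter s = None -> forall t, t \in s -> ~~ P t.
Proof.
move=> none_P t ts; apply/negP => P_t.
have : t \in sort leT [seq t <- s | P t] by rewrite mem_sort mem_filter P_t.
by move: none_P; rewrite /least_filter; case: sort.
Qed.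

Lemma least_filter_sub s s' : {subset s' <= s} ->
  (forall t, least_filter s = Some t -> t \in s') -> least_filter s' = least_filter s.
Proof.
move=> s's; case Es: (least_filter s) => [t|] => [/(_ t erefl) ts'|_].
  have [_ P_t t_min] := least_filterP Es.
  case Es': (least_filter s') => [t'|]; last by move: (least_filterN Es' ts'); rewrite P_t.
  have [t's' P_t' t'_min] := least_filterP Es'.
  by rewrite (@leT_anti t' t) // t'_min ?t_min ?s's.
case Es': (least_filter s') => [t'|] //; have [t's' P_t' _] := least_filterP Es'.
by move: (least_filterN Es (s's _ t's')); rewrite P_t'.
Qed.

End LeastFilter.

Lemma expRN_le_quad (R : realType) (y : R) : 0 <= y -> expR (- y) <= 1 - y + y ^+ 2.
Proof.
move=> y_ge0; have y1_gt0 : 0 < 1 + y by lra.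
rewrite expRN; apply: (@le_trans _ _ (1 + y)^-1).
  by rewrite lef_pV2 ?posrE ?expR_gt0 ?expR_ge1Dx.
by rewrite -div1r ler_pdivrMr //; nra.
Qed.

Lemma four_le_expR2 (R : realType) : 4 <= expR (2 : R).
Proof. by have := expR_ge1Dx (1 : R); rewrite -[2]/(1 + 1 : R) expRD; nra. Qed.

Section Clamp.
Variable R : realDomainType.

Definition clamp01 (y : R) : R := if y < 0 then 0 else if 1 < y then 1 else y.

Lemma clamp01_itv y : 0 <= clamp01 y <= 1.
Proof.
rewrite /clamp01; case: (ltrP y 0) => [|y_ge0]; first by rewrite lexx ler01.
by case: (ltrP 1 y) => [|y_le1]; rewrite ?lexx ?ler01 ?y_ge0.
Qed.

Lemma clamp01_dist y t : 0 <= t <= 1 -> `|clamp01 y - t| <= `|y - t|.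
Proof.
rewrite /clamp01 => /andP[t_ge0 t_le1].
case: (ltrP y 0) => [y_lt0|_].
  by rewrite sub0r normrN (ger0_norm t_ge0) ler0_norm ?subr_le0; lra.
case: (ltrP 1 y) => [y_gt1|_] //.
by rewrite !ger0_norm ?subr_ge0; lra.
Qed.

End Clamp.

Section Hedge.
Variables (R : realType) (J : finType) (X : choiceType).
Local Notation labelled := (X * R)%type.
Variables (feat : X -> J -> R) (eta tau : R) (leT : rel labelled).
Hypotheses (leT_total : total leT) (leT_trans : transitive leT).
Hypothesis leT_anti : antisymmetric leT.

Definition hedge_mass (u : J -> R) := \sum_j expR (eta * u j).
Definition hedge_weight u j := expR (eta * u j) / hedge_mass u.
Definition hedge_predict u x := \sum_j hedge_weight u j * feat x j.
Definition hedge_mistake u : pred labelled :=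
  fun t => tau < `|hedge_predict u t.1 - t.2|.
Definition hedge_loss u (t : labelled) j :=
  if t.2 < hedge_predict u t.1 then feat t.1 j else 1 - feat t.1 j.
Definition hedge_update u t j := u j - hedge_loss u t j.

Fixpoint hedge_run (s : seq labelled) (rounds : nat) u :=
  if rounds is r.+1 then
    if least_filter leT (hedge_mistake u) s is Some t
    then t :: hedge_run s r (hedge_update u t) else [::]
  else [::].

Definition hedge_final s rounds u := foldl hedge_update u (hedge_run s rounds u).

Lemma hedge_run_sub s r u : {subset hedge_run s r u <= s}.
Proof.
elim: r u => [|r IH] u //= t; case Eu: least_filter => [t'|] //.
have [t's _ _] := least_filterP leT_total leT_trans Eu.
by rewrite inE => /predU1P [->|/IH].
Qed.

Lemma size_hedge_run s r u : (size (hedge_run s r u) <= r)%N.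
Proof. by elim: r u => [|r IH] u //=; case: least_filter => [t|] //=; rewrite ltnS. Qed.

Lemma hedge_run_sub_eq s s' r u : {subset hedge_run s r u <= s'} ->
  {subset s' <= s} -> hedge_run s' r u = hedge_run s r u.
Proof.
elim: r u => [|r IH] u //= run_s' s's.
rewrite (least_filter_sub leT_total leT_trans leT_anti s's); last first.
  by move=> t Et; apply: run_s'; rewrite Et mem_head.
case Eu: least_filter run_s' => [t|] // run_s'; congr (_ :: _).
by apply: IH => // y yr; apply: run_s'; rewrite inE yr orbT.
Qed.

Lemma hedge_run_done s r u : (size (hedge_run s r u) < r)%N ->
  forall t, t \in s -> ~~ hedge_mistake (hedge_final s r u) t.
Proof.
rewrite /hedge_final; elim: r u => [|r IH] u //=.
case Eu: least_filter => [t|] /=; first by rewrite ltnS; apply: IH.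
by move=> _; apply: least_filterN Eu.
Qed.

Variables (p : J -> R) (noise : R).
Hypotheses (p_ge0 : forall j, 0 <= p j) (p_sum1 : \sum_j p j = 1).
Hypothesis eta_ge0 : 0 <= eta.

Definition expect (v : J -> R) := \sum_j p j * v j.

Definition consistent (t : labelled) :=
  (forall j, 0 <= feat t.1 j <= 1) /\ `|t.2 - expect (feat t.1)| <= noise.

(* A mistake has margin tau - noise against the comparator p, while the
   quadratic bound on exp costs eta^2 per round. *)
Definition hedge_gain := eta * (tau - noise - eta).

Definition mass_bound u (m : nat) :=
  hedge_mass u <= #|J|%:R * expR (eta * expect u - m%:R * hedge_gain).

Lemma expect_cst c : expect (fun=> c) = c.
Proof. by rewrite /expect -mulr_suml p_sum1 mul1r. Qed.

Lemma expect_feat_itv x : (forall j, 0 <= feat x j <= 1) -> 0 <= expect (feat x) <= 1.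
Proof.
move=> feat01; apply/andP; split.
  by apply: sumr_ge0 => j _; case/andP: (feat01 j) => *; apply: mulr_ge0.
rewrite -[X in _ <= X](expect_cst 1); apply: ler_sum => j _.
by rewrite ler_wpM2l //; case/andP: (feat01 j).
Qed.

Lemma hedge_mass_gt0 u : 0 < hedge_mass u.
Proof.
have [j _|J0] := pickP (@predT J); last first.
  by move: p_sum1; rewrite big_pred0 // => /esym/eqP; rewrite oner_eq0.
rewrite /hedge_mass (bigD1 j) //= ltr_wpDr ?expR_gt0 //.
by apply: sumr_ge0 => i _; rewrite ltW ?expR_gt0.
Qed.

Lemma sum_hedge_weight u : \sum_j hedge_weight u j = 1.
Proof. by rewrite /hedge_weight -mulr_suml divff // gt_eqF ?hedge_mass_gt0. Qed.

(* Jensen's inequality for exp, via its tangent line at eta * expect u. *)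
Lemma expR_expect_le_mass u : expR (eta * expect u) <= hedge_mass u.
Proof.
set m := eta * expect u.
have tangent j : expR m * (1 + (eta * u j - m)) <= expR (eta * u j).
  by rewrite -[X in _ <= expR X](subrKC m) expRD ler_wpM2l ?expR_ge1Dx ?expR_ge0.
have mean_tangent : \sum_j p j * (expR m * (1 + (eta * u j - m))) = expR m.
  rewrite (eq_bigr (fun j => expR m * p j + expR m * eta * (p j * u j) - expR m * m * p j));
    last by move=> j _; ring.
  by rewrite sumrB big_split /= -!mulr_sumr p_sum1 -/(expect u) /m; ring.
rewrite -mean_tangent; apply: (@le_trans _ _ (\sum_j p j * expR (eta * u j))).
  by apply: ler_sum => j _; rewrite ler_wpM2l.
apply: ler_sum => j _; rewrite ler_piMl ?expR_ge0 //.
by rewrite -p_sum1 (bigD1 j) //= lerDl sumr_ge0.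
Qed.

Lemma mass_bound0 : mass_bound (fun=> 0) 0.
Proof.
rewrite /mass_bound /hedge_mass expect_cst !mulr0 mul0r subr0 expR0 mulr1.
by rewrite (eq_bigr (fun=> 1)) ?sumr_const // => j _; rewrite mulr0 expR0.
Qed.

Lemma hedge_mass_shift u z : (forall j, 0 <= z j <= 1) ->
  hedge_mass (fun j => u j - z j) <=
  hedge_mass u * expR (eta ^+ 2 - eta * \sum_j hedge_weight u j * z j).
Proof.
move=> z01; have mass_neq0 := gt_eqF (hedge_mass_gt0 u).
set a := \sum_j hedge_weight u j * z j.
have mass_quad : hedge_mass u * (1 + (eta ^+ 2 - eta * a)) =
    \sum_j expR (eta * u j) * (1 - eta * z j + eta ^+ 2).
  rewrite [LHS](_ : _ = hedge_mass u + eta ^+ 2 * hedge_mass u -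
                        eta * (hedge_mass u * a)); last by ring.
  have -> : hedge_mass u * a = \sum_j expR (eta * u j) * z j.
    rewrite mulr_sumr; apply: eq_bigr => j _; rewrite /hedge_weight.
    by field; rewrite mass_neq0.
  rewrite /hedge_mass !mulr_sumr -big_split -sumrB /=.
  by apply: eq_bigr => j _; ring.
apply: (@le_trans _ _ (hedge_mass u * (1 + (eta ^+ 2 - eta * a)))); last first.
  by rewrite ler_wpM2l ?expR_ge1Dx // ltW ?hedge_mass_gt0.
rewrite mass_quad; apply: ler_sum => j _; rewrite mulrBr expRD ler_wpM2l ?expR_ge0 //.
have /andP[z_ge0 z_le1] := z01 j.
have : (eta * z j) ^+ 2 <= eta ^+ 2 by rewrite exprMn ler_piMr ?exprn_ge0 ?expr_le1.
by have := expRN_le_quad (mulr_ge0 eta_ge0 z_ge0); lra.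
Qed.

Lemma hedge_mistake_margin u t : consistent t -> hedge_mistake u t ->
  tau - noise <= \sum_j hedge_weight u j * hedge_loss u t j - expect (hedge_loss u t).
Proof.
rewrite /hedge_mistake /hedge_loss /expect => -[_]; rewrite ler_norml => noise_t.
case: (ltrP t.2 (hedge_predict u t.1)) => [y_lt|y_ge] mistake_t.
  by rewrite -/(hedge_predict u t.1) -/(expect (feat t.1)); lra.
have -> : \sum_j hedge_weight u j * (1 - feat t.1 j) = 1 - hedge_predict u t.1.
  by rewrite -[in RHS](sum_hedge_weight u) -sumrB; apply: eq_bigr => j _; ring.
have -> : \sum_j p j * (1 - feat t.1 j) = 1 - expect (feat t.1).
  by rewrite -[in RHS]p_sum1 -sumrB; apply: eq_bigr => j _; ring.
lra.
Qed.

Lemma mass_bound_update u m t : consistent t -> hedge_mistake u t ->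
  mass_bound u m -> mass_bound (hedge_update u t) m.+1.
Proof.
move=> cons_t mistake_t bound_u.
have margin := hedge_mistake_margin cons_t mistake_t.
have loss01 j : 0 <= hedge_loss u t j <= 1.
  by have := cons_t.1 j; rewrite /hedge_loss; case: ifP => _; lra.
rewrite /mass_bound; apply: le_trans (@hedge_mass_shift u _ loss01) _.
apply: le_trans (ler_wpM2r (expR_ge0 _) bound_u) _.
rewrite -mulrA -expRD ler_wpM2l ?ler0n // ler_expR -natr1.
have -> : expect (hedge_update u t) = expect u - expect (hedge_loss u t).
  by rewrite /expect -sumrB; apply: eq_bigr => j _; rewrite /hedge_update; ring.
have := ler_wpM2l eta_ge0 margin; rewrite /hedge_gain; lra.
Qed.

Lemma mass_bound_run s r u m : (forall t, t \in s -> consistent t) ->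
  mass_bound u m -> mass_bound (hedge_final s r u) (m + size (hedge_run s r u)).
Proof.
rewrite /hedge_final; elim: r u m => [|r IH] u m cons_s bound_u /=.
  by rewrite addn0.
case Eu: least_filter => [t|] /=; last by rewrite addn0.
have [ts mistake_t _] := least_filterP leT_total leT_trans Eu.
rewrite addnS -addSn; apply: IH => //.
exact: mass_bound_update (cons_s t ts) mistake_t bound_u.
Qed.

Lemma mass_bound_card u m : mass_bound u m -> expR (m%:R * hedge_gain) <= #|J|%:R.
Proof.
move=> bound_u; have := le_trans (expR_expect_le_mass u) bound_u.
by rewrite expRD expRN mulrCA ler_pMr ?expR_gt0 // ler_pdivlMr ?expR_gt0 // mul1r.
Qed.

Variable rounds : nat.
Hypothesis rounds_large : #|J|%:R < expR (rounds.+1%:R * hedge_gain).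

Theorem hedge_final_consistent s : (forall t, t \in s -> consistent t) ->
  forall t, t \in s -> ~~ hedge_mistake (hedge_final s rounds (fun=> 0)) t.
Proof.
move=> cons_s; have := size_hedge_run s rounds (fun=> 0).
rewrite leq_eqVlt => /orP [/eqP full|]; last exact: hedge_run_done.
move=> t ts; apply/negP => mistake_t.
have := mass_bound_run rounds cons_s mass_bound0; rewrite add0n full => bound.
have := mass_bound_card (mass_bound_update (cons_s t ts) mistake_t bound).
by rewrite leNgt rounds_large.
Qed.

Definition hedge_compress (S : {fset labelled}) : {fset labelled} :=
  seq_fset tt (hedge_run (enum_fset S) rounds (fun=> 0)).

Definition hedge_reconstruct (S : {fset labelled}) (x : X) : R :=
  clamp01 (hedge_predict (hedge_final (enum_fset S) rounds (fun=> 0)) x).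

Lemma hedge_compress_sub S : (hedge_compress S `<=` S)%fset.
Proof. by apply/fsubsetP => t; rewrite seq_fsetE => /hedge_run_sub. Qed.

Lemma card_hedge_compress S : (#|` hedge_compress S| <= rounds)%N.
Proof. by rewrite size_seq_fset (leq_trans (size_undup _)) ?size_hedge_run. Qed.

(* The learner run on its own mistakes replays the same run. *)
Lemma hedge_final_compress S :
  hedge_final (enum_fset (hedge_compress S)) rounds (fun=> 0) =
  hedge_final (enum_fset S) rounds (fun=> 0).
Proof.
rewrite /hedge_final (hedge_run_sub_eq (s := enum_fset S)) // => t.
  by rewrite seq_fsetE.
exact/fsubsetP/hedge_compress_sub.
Qed.

Theorem hedge_compress_accurate S : (forall t, t \in S -> consistent t) ->
  forall t, t \in S ->
  `|hedge_reconstruct (hedge_compress S) t.1 - expect (feat t.1)| <= tau + noise.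
Proof.
move=> cons_S t tS; have [feat01 noise_t] := cons_S t tS.
have := hedge_final_consistent cons_S tS; rewrite -leNgt => no_mistake.
rewrite /hedge_reconstruct hedge_final_compress.
apply: le_trans (clamp01_dist _ (expect_feat_itv feat01)) _.
rewrite -(subrK t.2 (hedge_predict _ _)) -addrA.
exact: le_trans (ler_normD _ _) (lerD no_mistake noise_t).
Qed.
End Hedge.

Section Qubits.
Variable n : nat.

Definition qbits (a : 'I_(qdim n)) : bits n := [ffun k => qbit a k].

Lemma qbits_inj : injective qbits.
Proof.
move=> a b /ffunP same; apply/val_inj/(binary_digits_inj (ltn_ord a) (ltn_ord b)).
by move=> k k_lt; have := same (Ordinal k_lt); rewrite !ffunE.
Qed.

Lemma qbits_bij : bijective qbits.
Proof. by apply: inj_card_bij; rewrite ?card_ffun ?card_bool ?card_ord //; apply: qbits_inj. Qed.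

Definition flip (x w : bits n) : bits n := [ffun k => w k (+) x k].

Lemma flip_inj x : injective (flip x).
Proof.
move=> w w' /ffunP same; apply/ffunP => k; have := same k; rewrite !ffunE.
by case: (w k) (w' k) (x k) => [] [] [].
Qed.

End Qubits.

Lemma adjmxE (R : realType) m p (A : 'M[R[i]]_(m, p)) i j : adjmx A i j = (A j i)^*%C.
Proof. by rewrite !mxE. Qed.

Lemma Re_sum (R : rcfType) (I : finType) (F : I -> R[i]) :
  complex.Re (\sum_i F i) = \sum_i complex.Re (F i).
Proof. exact: (raddf_sum (@complex.Re R : Rcomplex R -> R)). Qed.

Section PauliMatrices.
Variables (R : realType) (n : nat).
Local Notation C := R[i].

Lemma XpowE x (a b : 'I_(qdim n)) : Xpow R x a b = (qbits a == flip x (qbits b))%:R.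
Proof.
rewrite mxE; suff -> : [forall k, qbit a k == qbit b k (+) x k] = (qbits a == flip x (qbits b)).
  by case: (_ == _).
apply/forallP/eqP => [same|eq_ab k]; first by apply/ffunP => k; rewrite !ffunE; apply/eqP/same.
by have := congr1 (fun w : bits n => w k) eq_ab; rewrite !ffunE => ->.
Qed.

Lemma pauliE z x (a b : 'I_(qdim n)) :
  pauli R z x a b =
  'i%C ^+ #|[set k | z k && x k]| * (-1) ^+ #|[set k | z k && qbit a k]| * Xpow R x a b.
Proof.
rewrite mxE mxE (bigD1 a) //= big1 ?addr0 => [|b' /negbTE b'a]; rewrite mxE ?eqxx ?mulrA //.
by rewrite eq_sym b'a mul0r.
Qed.

Lemma pauli_unitary (z x : bits n) : adjmx (pauli R z x) *m pauli R z x = 1%:M.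
Proof.
apply/matrixP => a c; rewrite !mxE.
have column_prod b : (adjmx (pauli R z x)) a b * pauli R z x b c =
    (qbits b == flip x (qbits a))%:R * (qbits b == flip x (qbits c))%:R.
  rewrite adjmxE !pauliE !XpowE !rmorphM /= rmorphXn rmorph_sign conjc_nat.
  have unit_i : ('i%C)^*%C * 'i%C = 1 :> C.
    by apply/eqP; rewrite eq_complex /=; apply/andP; split; apply/eqP; ring.
  by rewrite mulrACA [X in X * _]mulrACA -!exprMn unit_i mulrNN mulr1 !expr1n !mul1r.
rewrite (eq_bigr _ (fun b _ => column_prod b)).
have [g qbitsK gK] := qbits_bij n.
rewrite (reindex g); last by exists (@qbits n) => w _; rewrite ?qbitsK ?gK.
rewrite (bigD1 (flip x (qbits a))) //= gK eqxx mul1r big1 ?addr0 => [|w /negbTE]; last first.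
  by rewrite gK => ->; rewrite mul0r.
by rewrite (inj_eq (@flip_inj n x)) (inj_eq (@qbits_inj n)) eq_sym.
Qed.

End PauliMatrices.

Lemma sum_mxtens_index (V : nmodType) m k (F : 'I_(m * k) -> V) :
  \sum_i F i = \sum_(a < m) \sum_(b < k) F (mxtens_index (a, b)).
Proof.
have index_bij : bijective (@mxtens_index m k).
  by exists (@mxtens_unindex m k); [exact: mxtens_indexK|exact: mxtens_unindexK].
by rewrite pair_big (reindex _ (onW_bij _ index_bij)); apply: eq_bigr => -[].
Qed.

Lemma quad_formE (R : realType) m (A : 'M[R[i]]_m) (v : 'cV[R[i]]_m) :
  (adjmx v *m A *m v) 0 0 = \sum_k \sum_l (v k 0)^*%C * A k l * v l 0.
Proof.
rewrite mxE exchange_big; apply: eq_bigr => l _.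
by rewrite mxE mulr_suml; apply: eq_bigr => k _; rewrite adjmxE.
Qed.

Section Vectorization.
Variables (R : realType) (m : nat).
Local Notation C := R[i].

Lemma mulmx_delta_entry (A B : 'M[C]_m) a c b e :
  (A *m delta_mx a c *m B) b e = A b a * B c e.
Proof.
rewrite mxE (bigD1 c) //= big1 ?addr0 => [|l /negbTE l_c]; rewrite mxE.
  by rewrite (bigD1 a) //= big1 ?addr0 => [|k /negbTE k_a]; rewrite !mxE ?eqxx ?k_a ?mulr1 ?mulr0.
by rewrite big1 ?mul0r // => k _; rewrite mxE l_c andbF mulr0.
Qed.

(* The column vector |K>> = sum_a |a> (x) K|a>, whose rank-one projector is
   the Choi matrix of the map rho |-> K rho K^dagger. *)
Definition vecmx (K : 'M[C]_m) : 'cV[C]_(m * m) :=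
  \col_k K (mxtens_unindex k).2 (mxtens_unindex k).1.

Lemma vecmxE K a b : vecmx K (mxtens_index (a, b)) 0 = K b a.
Proof. by rewrite mxE mxtens_indexK. Qed.

Lemma tens_delta_sum_entry (F : 'I_m -> 'I_m -> 'M[C]_m) a b c e :
  (\sum_i \sum_j (delta_mx i j *t F i j)) (mxtens_index (a, b)) (mxtens_index (c, e)) =
  F a c b e.
Proof.
rewrite summxE (bigD1 a) //= [X in _ + X]big1 => [|i /negbTE i_a]; last first.
  by rewrite summxE big1 // => j _; rewrite tensmxE mxE eq_sym i_a mul0r.
rewrite addr0 summxE (bigD1 c) //= [X in _ + X]big1 => [|j /negbTE j_c].
  by rewrite tensmxE mxE !eqxx mul1r addr0.
by rewrite tensmxE mxE eq_sym j_c andbF mul0r.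
Qed.

Lemma vecmx_form_tens1 (K sigma : 'M[C]_m) : adjmx K *m K = 1%:M ->
  (adjmx (vecmx K) *m (sigma *t 1%:M) *m vecmx K) 0 0 = \tr sigma.
Proof.
move=> K_isometry; rewrite quad_formE sum_mxtens_index; apply: eq_bigr => a _.
have collapse b c : \sum_e (vecmx K (mxtens_index (a, b)) 0)^*%C *
      (sigma *t 1%:M) (mxtens_index (a, b)) (mxtens_index (c, e)) *
      vecmx K (mxtens_index (c, e)) 0 = sigma a c * ((K b a)^*%C * K b c).
  rewrite (bigD1 b) //= big1 ?addr0 => [|e /negbTE e_b]; rewrite tensmxE !vecmxE mxE.
    by rewrite eqxx mulr1 mulrCA mulrA.
  by rewrite eq_sym e_b mulr0n mulr0 mulr0 mul0r.
have isometry_entry c : \sum_b (K b a)^*%C * K b c = (a == c)%:R.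
  have := congr1 (fun M : 'M[C]_m => M a c) K_isometry; rewrite !mxE => <-.
  by apply: eq_bigr => b _; rewrite adjmxE.
under eq_bigr do rewrite sum_mxtens_index; under eq_bigr do under eq_bigr do rewrite collapse.
rewrite exchange_big; under eq_bigr do rewrite -mulr_sumr isometry_entry.
rewrite (bigD1 a) //= big1 ?eqxx ?mulr1 ?addr0 // => c /negbTE c_a.
by rewrite eq_sym c_a mulr0.
Qed.

End Vectorization.

Section PauliChoi.
Variables (R : realType) (n : nat).
Local Notation C := R[i].
Local Notation d := (qdim n).

Definition pauli_vec (j : bits n * bits n) := vecmx (pauli R j.1 j.2).

Definition pauli_feature j (E : 'M[C]_(d * d)) : R :=
  complex.Re ((adjmx (pauli_vec j) *m E *m pauli_vec j) 0 0).

Lemma choiE p :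
  choi p = \sum_j (p j)%:C%C *: (pauli_vec j *m adjmx (pauli_vec j)).
Proof.
apply/matrixP => k l; case: (mxtens_indexP k) => a b; case: (mxtens_indexP l) => c e.
rewrite tens_delta_sum_entry /pauli_channel !summxE; apply: eq_bigr => j _.
rewrite [LHS]mxE [RHS]mxE mulmx_delta_entry [in RHS]mxE big_ord1.
by rewrite !adjmxE !vecmxE.
Qed.

Lemma fP_expect p E : fP p E = \sum_j p j * pauli_feature j E.
Proof.
rewrite /fP choiE mulmx_sumr (big_morph _ (@mxtraceD _ _) (mxtrace0 _ _)) Re_sum.
apply: eq_bigr => j _; rewrite -scalemxAr mxtraceZ mulmxA mxtrace_mulC mulmxA.
by rewrite /pauli_feature /mxtrace big_ord1; case: (_ 0 0) => x y /=; rewrite mul0r subr0.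
Qed.

Lemma pauli_feature_itv j E : is_test E -> 0 <= pauli_feature j E <= 1.
Proof.
move=> [E_psd [sigma [[_ tr_sigma] gap_psd]]].
have entryB (A B : 'M[C]_1) : (A - B) 0 0 = A 0 0 - B 0 0 by rewrite !mxE.
have := gap_psd (pauli_vec j); have := E_psd (pauli_vec j).
rewrite mulmxBr mulmxBl entryB vecmx_form_tens1 ?pauli_unitary // tr_sigma /pauli_feature.
by case: (_ 0 0) => x y; rewrite !lecE /= => /andP[_ x_ge0] /andP[_]; lra.
Qed.

End PauliChoi.

Section ExampleOrder.
Variables (R : realType) (m : nat).
Local Notation labelled := ('M[R[i]]_m * R)%type.

Definition example_code (e : labelled) : seq R :=
  e.2 :: [seq complex.Re (e.1 ij.1 ij.2) | ij <- enum {: 'I_m * 'I_m}] ++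
         [seq complex.Im (e.1 ij.1 ij.2) | ij <- enum {: 'I_m * 'I_m}].

Lemma example_code_inj : injective example_code.
Proof.
move=> [A y] [B y'] [<-] /eqP; rewrite eqseq_cat ?size_map // => /andP[/eqP eqRe /eqP eqIm].
congr (_, _); apply/matrixP => i j; have ij_enum : (i, j) \in enum {: 'I_m * 'I_m} by rewrite mem_enum.
have := (proj2 (eq_in_map _ _ _) eqRe) _ ij_enum; have := (proj2 (eq_in_map _ _ _) eqIm) _ ij_enum.
by case: (A i j) (B i j) => [a1 a2] [b1 b2] /= -> ->.
Qed.

(* Any total order does: the learner corrects the least mistaken example, a
   choice that survives passing to a subsample containing it. *)
Definition example_le (e e' : labelled) : bool :=
  ((example_code e : seqlexi R) <= (example_code e' : seqlexi R))%O.

Lemma example_le_total : total example_le.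
Proof. by move=> e e'; apply: le_total. Qed.

Lemma example_le_trans : transitive example_le.
Proof. by move=> e' e e''; apply: le_trans. Qed.

Lemma example_le_anti : antisymmetric example_le.
Proof. by move=> e e' /le_anti/example_code_inj. Qed.

End ExampleOrder.

Section PauliCompression.
Variables (R : realType) (n : nat) (eps : R).
Hypothesis eps_gt0 : 0 < eps.
Local Notation feature := (fun E j => @pauli_feature R n j E).

Definition pauli_rounds := Num.truncn (72 * n%:R / eps ^+ 2).

Definition pauli_compress :=
  hedge_compress feature (eps / 6) (2 * eps / 3) (@example_le R _) pauli_rounds.

Definition pauli_reconstruct :=
  hedge_reconstruct feature (eps / 6) (2 * eps / 3) (@example_le R _) pauli_rounds.

Lemma pauli_compress_sub S : (pauli_compress S `<=` S)%fset.
Proof. exact: hedge_compress_sub (@example_le_total R _) (@example_le_trans R _) _ _. Qed.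

Lemma pauli_rounds_large : #|{: bits n * bits n}|%:R <
  expR (pauli_rounds.+1%:R * hedge_gain (eps / 6) (2 * eps / 3) (eps / 3)).
Proof.
have -> : hedge_gain (eps / 6) (2 * eps / 3) (eps / 3) = eps ^+ 2 / 36.
  by rewrite /hedge_gain; field.
have := truncnS_gt (72 * n%:R / eps ^+ 2); rewrite -/pauli_rounds ltr_pdivrMr ?exprn_gt0 //.
move=> rounds_gt; apply: (@le_lt_trans _ _ (expR (n%:R * 2))); last first.
  by rewrite ltr_expR mulrA ltr_pdivlMr //; lra.
rewrite expRM_natl card_prod card_ffun card_bool card_ord -expnMn natrX.
by rewrite lerXn2r ?nnegrE ?expR_ge0 ?four_le_expR2.
Qed.

Lemma pauli_reconstruct_accurate p : pauli_prob p ->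
  forall S : {fset example R n},
    (forall s, s \in S -> is_test s.1 /\ `|s.2 - fP p s.1| <= eps / 3) ->
    forall s, s \in S -> `|pauli_reconstruct (pauli_compress S) s.1 - fP p s.1| <= eps.
Proof.
move=> [p_ge0 p_sum1] S noisy_S s sS.
have consistent_S t : t \in S -> consistent feature p (eps / 3) t.
  move=> tS; have [test_t noise_t] := noisy_S t tS.
  by split=> [j|]; [apply: pauli_feature_itv | rewrite /expect -fP_expect].
have rate_ge0 : 0 <= eps / 6 by rewrite divr_ge0 ?ltW.
have := hedge_compress_accurate (@example_le_total R _) (@example_le_trans R _)
  (@example_le_anti R _) p_ge0 p_sum1 rate_ge0 pauli_rounds_large consistent_S sS.
by rewrite /expect -fP_expect => /le_trans; apply; lra.
Qed.

End PauliCompression.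

Theorem corollary3p17 (R : realType) :
  exists c : R, 0 < c /\
    forall (n : nat) (eps : R), 0 < eps < 1 ->
      exists k : nat, k%:R <= c * n%:R / eps ^+ 2 /\
        exists (kappa : {fset example R n} -> {fset example R n})
               (rho : {fset example R n} -> 'M[R[i]]_(qdim n * qdim n) -> R),
          pauli_compression_scheme eps (eps / 3) k kappa rho.
Proof.
exists 72; split=> [|n eps /andP[eps_gt0 _]]; first lra.
exists (pauli_rounds n eps); split.
  by rewrite /pauli_rounds truncn_le divr_ge0 ?mulr_ge0 ?exprn_ge0 // ltW.
exists (pauli_compress eps), (pauli_reconstruct eps).
split; [|split; [|split]].
- by move=> S; split; [apply: pauli_compress_sub | apply: card_hedge_compress].
- by move=> S E _; apply: clamp01_itv.
- move=> p p_prob S exact_S; apply: pauli_reconstruct_accurate => // s sS.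
  have [test_s ->] := exact_S s sS; rewrite subrr normr0; split=> //; lra.
- move=> p p_prob S noisy_S; apply: pauli_reconstruct_accurate => // s sS.
  by have [] := noisy_S s sS.
Qed.
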